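(* Let $S$ be a monoid, and let $G$ be the union of all sets $E$ with $1\in E\subseteq E(S)$ such that $S$ is $E$-protomodal. Then $S$ is $G$-protomodal, and $H\subseteq G$ for every $H$ with $1\in H\subseteq E(S)$ such that $S$ is $H$-protomodal. If $E'$ is maximal right pre-reduced in $G$, then $S$ is a modal left $E'$-monoid; $E'$ is largest possible in the sense that whenever $S$ is a modal left $E$-monoid there is an injective map $e\mapsto e'$ from $E$ into $E'$ with $e\sim_r e'$ for all $e\in E$; and $S$ is in fact an inductive left $E'$-monoid.
   Context: For a semigroup $S$, $E(S)$ is its set of idempotents and $Se=\{ue\mid u\in S\}$; for $e,f\in E(S)$, $e\le_r f$ iff $e=ef$, and $e\sim_r f$ iff $e\le_r f$ and $f\le_r e$. $E\subseteq E(S)$ is right pre-reduced if $e=ef$ and $f=fe$ imply $e=f$ for $e,f\in E$. For $F\subseteq E(S)$, $E$ is maximal right pre-reduced in $F$ if $E\subseteq F$, $E$ is right pre-reduced, and every element of $F$ is $\sim_r$-related to an element of $E$. For $s,t\in S$, $Eq(s,t)=\{u\in S\mid us=ut\}$. For a monoid $S$ and $1\in F\subseteq E(S)$, $S$ is $F$-protomodal if for every $e\in F$ and $s\in S$, $Eq(s,se)$ is non-empty and equals $Sf$ for some $f\in F$. Let $1\in E\subseteq E(S)$. $S$ is a modal left $E$-monoid if $E$ is right pre-reduced and (I1') for all $t\in S$, $e\in E$ there is $t\cdot e\in E$ such that for all $s\in S$: $ste=st$ iff $s(t\cdot e)=s$. $S$ is an inductive left $E$-monoid if it is a modal left $E$-monoid,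 $(E,\le_r)$ is a meet-semilattice with meet $\wedge$, and (I2') for $s\in S$, $e,f\in E$: $se=sf=s$ implies $s(e\wedge f)=s$. *)

Set Implicit Arguments.

Section Monoid.
Variables (S : Type) (mul : S -> S -> S) (one : S).

Definition is_monoid : Prop :=
  (forall a b c, mul a (mul b c) = mul (mul a b) c) /\
  (forall a, mul one a = a) /\ (forall a, mul a one = a).

Definition idem (e : S) : Prop := mul e e = e.

Definition le_r (e f : S) : Prop := e = mul e f.
Definition sim_r (e f : S) : Prop := le_r e f /\ le_r f e.

Definition lideal (f : S) : S -> Prop := fun u => exists v, u = mul v f.

Definition Eqz (s t : S) : S -> Prop := fun u => mul u s = mul u t.

Definition unital_idem_set (F : S -> Prop) : Prop :=
  F one /\ (forall e, F e -> idem e).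

Definition protomodal (F : S -> Prop) : Prop :=
  unital_idem_set F /\
  forall e s, F e ->
    (exists u, Eqz s (mul s e) u) /\
    exists f, F f /\ forall u, Eqz s (mul s e) u <-> lideal f u.

Definition protomodal_union : S -> Prop :=
  fun e => exists E : S -> Prop, protomodal E /\ E e.

Definition right_pre_reduced (E : S -> Prop) : Prop :=
  forall e f, E e -> E f -> e = mul e f -> f = mul f e -> e = f.

Definition max_right_pre_reduced_in (E F : S -> Prop) : Prop :=
  (forall e, E e -> F e) /\ right_pre_reduced E /\
  forall f, F f -> exists e, E e /\ sim_r f e.

Definition modal_left (E : S -> Prop) : Prop :=
  unital_idem_set E /\ right_pre_reduced E /\
  forall t e, E e -> exists te, E te /\
    forall s, mul (mul s t) e = mul s t <-> mul s te = s.

Definition is_meet_r (E : S -> Prop) (e f m : S) : Prop :=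
  E m /\ le_r m e /\ le_r m f /\
  forall g, E g -> le_r g e -> le_r g f -> le_r g m.

Definition inductive_left (E : S -> Prop) : Prop :=
  modal_left E /\
  exists meet : S -> S -> S,
    (forall e f, E e -> E f -> is_meet_r E e f (meet e f)) /\
    (forall s e f, E e -> E f -> mul s e = s -> mul s f = s ->
        mul s (meet e f) = s).

End Monoid.

(* Both protomodality and modality are statements about "residuals": for an
   idempotent f, Eq(t, te) = Sf says exactly that u t <=_r e iff u <=_r f,
   for all u.  Rephrasing the definitions this way (lemmas
   [protomodal_iff], [modal_left_iff]) shows that a modal left E-monoid is
   E-protomodal, and that residuals only depend on f up to ~_r.

   The union G of all protomodal sets is again protomodal.  It is moreover
   closed under intersections of left ideals: if a, b lie in a protomodal F
   and m generates Eq(a, ab), then m a generates Sa /\ Sb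
   ([lmeet_of_residual]); and the set of all such idempotent "meets" of
   elements of G is itself protomodal, hence contained in G.

   For a maximal right pre-reduced E' in G, every residual and every meet
   taken in G can be replaced by a ~_r-equivalent element of E'; this gives
   that S is a modal, indeed inductive, left E'-monoid.  Any E for which S is
   modal is protomodal, so E lies in G and maps injectively into E' by
   choosing ~_r-representatives (injectivity is right pre-reducedness). *)
From Stdlib Require Import ClassicalEpsilon.

Set Implicit Arguments.
Unset Strict Implicit.

Lemma choice_on (A B : Type) (b : B) (P : A -> Prop) (Q : A -> B -> Prop) :
  (forall x, P x -> exists y, Q x y) -> exists f : A -> B, forall x, P x -> Q x (f x).
Proof.
  intros HPQ. exists (fun x => epsilon (inhabits b) (Q x)).
  intros x Hx. apply epsilon_spec, HPQ, Hx.
Qed.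

Section Monoid.
Variables (S : Type) (mul : S -> S -> S) (one : S).
Hypothesis mulA : forall a b c, mul a (mul b c) = mul (mul a b) c.
Hypothesis mul1l : forall a, mul one a = a.
Hypothesis mul1r : forall a, mul a one = a.

(* f is a residual of e by t: Eq(t, te) = Sf, in terms of <=_r. *)
Definition residual (t e f : S) : Prop :=
  forall u, le_r mul (mul u t) e <-> le_r mul u f.

(* g generates the intersection of the left ideals Sa and Sb. *)
Definition lmeet (a b g : S) : Prop :=
  forall u, le_r mul u g <-> le_r mul u a /\ le_r mul u b.

Definition meet_closure (F : S -> Prop) (g : S) : Prop :=
  idem mul g /\ exists a b, F a /\ F b /\ lmeet a b g.

Lemma le_r_trans a b c : le_r mul a b -> le_r mul b c -> le_r mul a c.
Proof.
  unfold le_r. intros Hab Hbc.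
  rewrite Hab at 1. rewrite Hbc at 1. rewrite mulA, <- Hab. reflexivity.
Qed.

Lemma lideal_le_r f u : idem mul f -> (lideal mul f u <-> le_r mul u f).
Proof.
  intros Hf. split.
  - intros [v ->]. unfold le_r. rewrite <- mulA, Hf. reflexivity.
  - intros Hu. exists u. exact Hu.
Qed.

Lemma Eqz_le_r s e u : Eqz mul s (mul s e) u <-> le_r mul (mul u s) e.
Proof. unfold Eqz, le_r. rewrite mulA. split; auto. Qed.

Lemma residual_sim_r t e f f' : residual t e f -> sim_r mul f f' -> residual t e f'.
Proof.
  intros Hres [Hff' Hf'f] u. rewrite (Hres u).
  split; intros Hu; eapply le_r_trans; eassumption.
Qed.

Lemma lmeet_sim_r a b g g' : lmeet a b g -> sim_r mul g g' -> lmeet a b g'.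
Proof.
  intros Hm [Hgg' Hg'g] u. rewrite <- (Hm u).
  split; intros Hu; eapply le_r_trans; eassumption.
Qed.

Lemma protomodal_iff (F : S -> Prop) :
  protomodal mul one F <->
  unital_idem_set mul one F /\
  forall e s, F e -> exists f, F f /\ residual s e f.
Proof.
  split.
  - intros [HF P]. split; [exact HF|]. intros e s He.
    destruct (P e s He) as [_ [f [Hf Hu]]]. exists f. split; [exact Hf|].
    intros u. rewrite <- Eqz_le_r, Hu. apply lideal_le_r, (proj2 HF), Hf.
  - intros [HF P]. split; [exact HF|]. intros e s He.
    destruct (P e s He) as [f [Hf Hres]].
    assert (Hidf : idem mul f) by exact (proj2 HF f Hf).
    assert (Hu : forall u, Eqz mul s (mul s e) u <-> lideal mul f u).
    { intros u. rewrite Eqz_le_r, (Hres u). symmetry. apply lideal_le_r, Hidf. }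
    split.
    + exists f. apply Hu. exists f. symmetry. exact Hidf.
    + exists f. split; assumption.
Qed.

Lemma modal_left_iff (E : S -> Prop) :
  modal_left mul one E <->
  unital_idem_set mul one E /\ right_pre_reduced mul E /\
  forall t e, E e -> exists f, E f /\ residual t e f.
Proof.
  unfold modal_left, residual, le_r.
  split; intros [HE [Hrpr P]]; split; [exact HE| |exact HE|];
    split; try exact Hrpr;
    intros t e He; destruct (P t e He) as [f [Hf Hres]];
    exists f; split; try exact Hf;
    intros u; split; intros Hu; symmetry; apply (Hres u); symmetry; exact Hu.
Qed.

Lemma modal_left_protomodal E : modal_left mul one E -> protomodal mul one E.
Proof.
  rewrite modal_left_iff. intros [HE [_ P]].
  apply protomodal_iff. split; [exact HE|]. intros e s He. exact (P s e He).
Qed.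

Lemma one_protomodal : protomodal mul one (fun x => x = one).
Proof.
  apply protomodal_iff. split.
  - split; [reflexivity|]. intros e ->. apply mul1l.
  - intros e s ->. exists one. split; [reflexivity|].
    intros u. unfold le_r. rewrite !mul1r. split; reflexivity.
Qed.

Lemma protomodal_union_max F :
  protomodal mul one F -> forall e, F e -> protomodal_union mul one e.
Proof. intros PF e He. exists F. split; assumption. Qed.

Lemma union_protomodal : protomodal mul one (protomodal_union mul one).
Proof.
  split; [split|].
  - exact (protomodal_union_max one_protomodal eq_refl).
  - intros e [F [[[_ HF] _] He]]. exact (HF e He).
  - intros e s [F [PF He]].
    destruct (proj2 PF e s He) as [Hex [f [Hf Hu]]].
    split; [exact Hex|]. exists f. split; [|exact Hu].
    exact (protomodal_union_max PF Hf).
Qed.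

Lemma lmeet_of_residual a b m :
  idem mul a -> idem mul m -> residual a b m ->
  idem mul (mul m a) /\ lmeet a b (mul m a).
Proof.
  intros Ha Hm Hres.
  assert (Hmab : le_r mul (mul m a) b) by exact (proj2 (Hres m) (eq_sym Hm)).
  assert (Hmaa : le_r mul (mul m a) a).
  { unfold le_r. rewrite <- mulA, Ha. reflexivity. }
  assert (Hmeet : lmeet a b (mul m a)).
  { intros u. split.
    - intros Hu. split; eapply le_r_trans; eassumption.
    - intros [Hua Hub].
      assert (Hum : le_r mul u m).
      { apply Hres. unfold le_r. rewrite <- Hua. exact Hub. }
      unfold le_r. rewrite mulA, <- Hum. exact Hua. }
  split; [|exact Hmeet].
  symmetry. apply Hmeet. split; assumption.
Qed.

Lemma protomodal_lmeet F a b :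
  protomodal mul one F -> F a -> F b -> exists g, idem mul g /\ lmeet a b g.
Proof.
  intros PF Ha Hb. apply protomodal_iff in PF as [[_ HF] P].
  destruct (P b a Hb) as [m [Hm Hres]].
  exists (mul m a). apply lmeet_of_residual; auto.
Qed.

Lemma meet_closure_protomodal F :
  protomodal mul one F -> protomodal mul one (meet_closure F).
Proof.
  intros PF. pose proof PF as PF'. apply protomodal_iff in PF' as [[HF1 _] P].
  apply protomodal_iff. split; [split|].
  - split; [apply mul1l|]. exists one, one. repeat split; try assumption; tauto.
  - intros g [Hg _]. exact Hg.
  - intros g s [_ [a [b [Ha [Hb Hab]]]]].
    destruct (P a s Ha) as [a' [Ha' Hra]].
    destruct (P b s Hb) as [b' [Hb' Hrb]].
    destruct (protomodal_lmeet PF Ha' Hb') as [g' [Hg' Hm']].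
    exists g'. split.
    + split; [exact Hg'|]. exists a', b'. auto.
    + intros u. rewrite (Hab (mul u s)), (Hra u), (Hrb u), (Hm' u). reflexivity.
Qed.

Lemma union_lmeet_closed a b :
  protomodal_union mul one a -> protomodal_union mul one b ->
  exists g, protomodal_union mul one g /\ lmeet a b g.
Proof.
  intros Ha Hb.
  destruct (protomodal_lmeet union_protomodal Ha Hb) as [g [Hg Hm]].
  exists g. split; [|exact Hm].
  apply (protomodal_union_max (meet_closure_protomodal union_protomodal)).
  split; [exact Hg|]. exists a, b. auto.
Qed.

Section MaximalRightPreReduced.
Variable E' : S -> Prop.
Hypothesis HE' : max_right_pre_reduced_in mul E' (protomodal_union mul one).

Lemma max_rpr_idem e : E' e -> idem mul e.
Proof.
  intros He. apply (proj2 (proj1 union_protomodal)), (proj1 HE'), He.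
Qed.

Lemma max_rpr_one : E' one.
Proof.
  destruct HE' as [_ [_ cover]].
  destruct (cover one (proj1 (proj1 union_protomodal))) as [e [He [Hle _]]].
  unfold le_r in Hle. rewrite mul1l in Hle. rewrite Hle. exact He.
Qed.

Lemma max_rpr_modal : modal_left mul one E'.
Proof.
  destruct HE' as [sub [rpr cover]].
  pose proof union_protomodal as PG. apply protomodal_iff in PG as [_ P].
  apply modal_left_iff. split; [split|split].
  - exact max_rpr_one.
  - exact max_rpr_idem.
  - exact rpr.
  - intros t e He. destruct (P e t (sub e He)) as [f [Hf Hres]].
    destruct (cover f Hf) as [f' [Hf' Hs]].
    exists f'. split; [exact Hf'|]. exact (residual_sim_r Hres Hs).
Qed.

Lemma max_rpr_embeds E : modal_left mul one E ->
  exists phi : S -> S,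
    (forall e1 e2, E e1 -> E e2 -> phi e1 = phi e2 -> e1 = e2) /\
    (forall e, E e -> E' (phi e) /\ sim_r mul e (phi e)).
Proof.
  intros ME.
  pose proof (protomodal_union_max (modal_left_protomodal ME)) as EG.
  destruct HE' as [_ [_ cover]].
  destruct (@choice_on S S one E (fun e e' => E' e' /\ sim_r mul e e')
              (fun e He => cover e (EG e He))) as [phi Hphi].
  exists phi. split; [|exact Hphi].
  intros e1 e2 H1 H2 Heq.
  destruct (Hphi e1 H1) as [_ [A1 B1]], (Hphi e2 H2) as [_ [A2 B2]].
  rewrite Heq in A1, B1.
  apply (proj1 (proj2 ME)); auto.
  - exact (le_r_trans A1 B2).
  - exact (le_r_trans A2 B1).
Qed.

(* Meets in G, moved into E' along ~_r, make E' inductive. *)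
Lemma max_rpr_inductive : inductive_left mul one E'.
Proof.
  split; [exact max_rpr_modal|].
  destruct HE' as [sub [_ cover]].
  assert (Hex : forall p : S * S, E' (fst p) /\ E' (snd p) ->
                exists m, E' m /\ lmeet (fst p) (snd p) m).
  { intros [e f] [He Hf].
    destruct (union_lmeet_closed (sub e He) (sub f Hf)) as [g [Hg Hm]].
    destruct (cover g Hg) as [g' [Hg' Hs]].
    exists g'. split; [exact Hg'|]. exact (lmeet_sim_r Hm Hs). }
  destruct (choice_on one Hex) as [meet Hmeet].
  exists (fun e f => meet (e, f)). split.
  - intros e f He Hf. destruct (Hmeet (e, f) (conj He Hf)) as [Hm Hlm].
    cbn [fst snd] in Hlm.
    destruct (proj1 (Hlm _) (eq_sym (max_rpr_idem Hm))) as [Hme Hmf].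
    split; [exact Hm|]. split; [exact Hme|]. split; [exact Hmf|].
    intros g _ Hge Hgf. apply Hlm. split; assumption.
  - intros s e f He Hf Hse Hsf.
    destruct (Hmeet (e, f) (conj He Hf)) as [_ Hlm].
    symmetry. apply Hlm. split; symmetry; assumption.
Qed.

End MaximalRightPreReduced.
End Monoid.

Theorem proposition5p14 (S : Type) (mul : S -> S -> S) (one : S)
  (HS : is_monoid mul one) :
  let G := protomodal_union mul one in
  protomodal mul one G /\
  (forall H : S -> Prop, protomodal mul one H -> forall e, H e -> G e) /\
  (forall E' : S -> Prop, max_right_pre_reduced_in mul E' G ->
     modal_left mul one E' /\
     (forall E : S -> Prop, modal_left mul one E ->
        exists phi : S -> S,
          (forall e1 e2, E e1 -> E e2 -> phi e1 = phi e2 -> e1 = e2) /\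
          (forall e, E e -> E' (phi e) /\ sim_r mul e (phi e))) /\
     inductive_left mul one E').
Proof.
  intros G. destruct HS as [mulA [mul1l mul1r]].
  split; [exact (union_protomodal mulA mul1l mul1r)|].
  split; [exact (@protomodal_union_max S mul one)|].
  intros E' HE'. split; [|split].
  - exact (max_rpr_modal mulA mul1l mul1r HE').
  - exact (max_rpr_embeds mulA HE').
  - exact (max_rpr_inductive mulA mul1l mul1r HE').
Qed.
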